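(* Let $(\mathcal C,\mathbb E,\mathfrak s)$ be an $n$-exangulated category and $\varphi^\bullet:A^\bullet\to B^\bullet$ a morphism in $S(\mathcal C)$, where $A^\bullet=(A_0\xrightarrow{\alpha_0}\cdots\xrightarrow{\alpha_n}A_{n+1}\overset{\delta}{\dashrightarrow})$ and $B^\bullet=(B_0\xrightarrow{\beta_0}\cdots\xrightarrow{\beta_n}B_{n+1}\overset{\delta'}{\dashrightarrow})$. Then $\underline{\varphi^\bullet}$ is an epimorphism in $S(\mathcal C)/\mathcal R_2$ if and only if $[\varphi_{n+1}\ \ \beta_n]:A_{n+1}\oplus B_n\to B_{n+1}$ is a retraction (split epimorphism) in $\mathcal C$.
   Context: $(\mathcal C,\mathbb E,\mathfrak s)$ is an $n$-exangulated category in the sense of Herschend–Liu–Nakaoka; for $\delta\in\mathbb E(C,A)$, $a_*\delta=\mathbb E(C,a)\delta$, $c^*\delta=\mathbb E(c,A)\delta$. $S(\mathcal C)$ is the category whose objects are distinguished $n$-exangles and whose morphisms $A^\bullet\to B^\bullet$ are tuples $(\varphi_0,\dots,\varphi_{n+1})$ making all squares commute with $(\varphi_0)_*\delta=(\varphi_{n+1})^*\delta'$. $\mathcal R_2$ is the ideal of morphisms $\varphi^\bullet$ with $\varphi_{n+1}$ factoring through $\beta_n$, and $\underline{\varphi^\bullet}$ denotes the class in $S(\mathcal C)/\mathcal R_2$. *)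

(* n-exangulated categories (Herschend--Liu--Nakaoka),
   written for n = m.+1 (HLN assume n >= 1). *)
From HB Require Import structures.
From mathcomp Require Import all_boot all_algebra.
Set Implicit Arguments. Unset Strict Implicit. Unset Printing Implicit Defensive.
Import GRing.Theory.
Local Open Scope ring_scope.

Record AddCat := {
  Obj :> Type;
  Hom : Obj -> Obj -> zmodType;
  idm : forall A, Hom A A;
  cmp : forall A B C, Hom B C -> Hom A B -> Hom A C;
  cmpA : forall A B C D (h : Hom C D) (g : Hom B C) (f : Hom A B),
      cmp h (cmp g f) = cmp (cmp h g) f;
  cmp1m : forall A B (f : Hom A B), cmp (idm B) f = f;
  cmpm1 : forall A B (f : Hom A B), cmp f (idm A) = f;
  cmpDl : forall A B C (g g' : Hom B C) (f : Hom A B),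
      cmp (g + g') f = cmp g f + cmp g' f;
  cmpDr : forall A B C (g : Hom B C) (f f' : Hom A B),
      cmp g (f + f') = cmp g f + cmp g f';
  zob : Obj;
  zob_id : idm zob = 0;
  bp : Obj -> Obj -> Obj;
  bi1 : forall A B, Hom A (bp A B);
  bi2 : forall A B, Hom B (bp A B);
  bp1 : forall A B, Hom (bp A B) A;
  bp2 : forall A B, Hom (bp A B) B;
  bp11 : forall A B, cmp (bp1 A B) (bi1 A B) = idm A;
  bp22 : forall A B, cmp (bp2 A B) (bi2 A B) = idm B;
  bp12 : forall A B, cmp (bp1 A B) (bi2 A B) = 0;
  bp21 : forall A B, cmp (bp2 A B) (bi1 A B) = 0;
  bpsum : forall A B,
      cmp (bi1 A B) (bp1 A B) + cmp (bi2 A B) (bp2 A B) = idm (bp A B)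
}.

Arguments zob {a}.
Arguments bi1 {a A B}. Arguments bi2 {a A B}.
Arguments bp1 {a A B}. Arguments bp2 {a A B}.

Notation "g ⊚ f" := (cmp g f) (at level 40, left associativity).

Definition eqH (C : AddCat) (A B : C) (e : A = B) : Hom A B :=
  match e in _ = B' return Hom A B' with erefl => idm A end.

Definition rowmap (C : AddCat) (A B Z : C) (f : Hom A Z) (g : Hom B Z)
  : Hom (bp A B) Z := f ⊚ bp1 + g ⊚ bp2.

Definition is_retraction (C : AddCat) (X Y : C) (r : Hom X Y) : Prop :=
  exists t : Hom Y X, r ⊚ t = idm Y.

(* Biadditive functor E : C^op x C -> Ab.  Ext Z A = E(Z,A);          *)
(* pf a = a_* ,  pb c = c^* .                                          *)
Record BiFun (C : AddCat) := {
  Ext : C -> C -> zmodType;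
  pf : forall (Z A A' : C), Hom A A' -> Ext Z A -> Ext Z A';
  pb : forall (Z' Z A : C), Hom Z' Z -> Ext Z A -> Ext Z' A;
  pf_id : forall Z A (d : Ext Z A), pf (idm A) d = d;
  pf_cmp : forall Z A A' A'' (a : Hom A A') (a' : Hom A' A'') (d : Ext Z A),
      pf (a' ⊚ a) d = pf a' (pf a d);
  pb_id : forall Z A (d : Ext Z A), pb (idm Z) d = d;
  pb_cmp : forall Z'' Z' Z A (c' : Hom Z'' Z') (c : Hom Z' Z) (d : Ext Z A),
      pb (c ⊚ c') d = pb c' (pb c d);
  pf_pb : forall Z' Z A A' (a : Hom A A') (c : Hom Z' Z) (d : Ext Z A),
      pf a (pb c d) = pb c (pf a d);
  pf_addd : forall Z A A' (a : Hom A A') (d d' : Ext Z A),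
      pf a (d + d') = pf a d + pf a d';
  pf_adda : forall Z A A' (a a' : Hom A A') (d : Ext Z A),
      pf (a + a') d = pf a d + pf a' d;
  pb_addd : forall Z' Z A (c : Hom Z' Z) (d d' : Ext Z A),
      pb c (d + d') = pb c d + pb c d';
  pb_addc : forall Z' Z A (c c' : Hom Z' Z) (d : Ext Z A),
      pb (c + c') d = pb c d + pb c' d
}.

Arguments Ext {C} b.
Arguments pf {C b Z A A'}.
Arguments pb {C b Z' Z A}.

Definition castExt (C : AddCat) (E : BiFun C) (A A' Z Z' : C)
  (eA : A = A') (eZ : Z' = Z) (d : Ext E Z A) : Ext E Z' A' :=
  pf (eqH eA) (pb (eqH eZ) d).

(* (n+2)-term sequences X^0 -> X^1 -> ... -> X^{n+1}, indexed by nat  *)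
(* (indices > n+1 are irrelevant).                                    *)
Record Cx (C : AddCat) := { ob : nat -> C; df : forall i, Hom (ob i) (ob i.+1) }.
Arguments ob {C}. Arguments df {C}.

Section NExang.
Variable m : nat.
Local Notation n := m.+1.
Variable C : AddCat.
Variable E : BiFun C.

Definition is_cxmor (X Y : Cx C) (f : forall i, Hom (ob X i) (ob Y i)) : Prop :=
  forall i, (i <= n)%N -> f i.+1 ⊚ df X i = df Y i ⊚ f i.

(* homotopy of morphisms in C^{n+2}_{(A,C)} :  k i = phi^{i+1} : X^{i+1} -> Y^i *)
Definition homotopic (X Y : Cx C) (f g : forall i, Hom (ob X i) (ob Y i)) : Prop :=
  exists k : forall i, Hom (ob X i.+1) (ob Y i),
    k 0%N ⊚ df X 0%N = 0 /\
    (forall j, (j < n)%N -> f j.+1 - g j.+1 = df Y j ⊚ k j + k j.+1 ⊚ df X j.+1) /\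
    df Y n ⊚ k n = 0.

(* homotopy equivalence in C^{n+2}_{(A,C)}, the end objects of X and Y
   being identified by e0, e1 *)
Definition htpy_equiv (X Y : Cx C) (e0 : ob Y 0%N = ob X 0%N)
  (e1 : ob Y n.+1 = ob X n.+1) : Prop :=
  exists (f : forall i, Hom (ob X i) (ob Y i)) (g : forall i, Hom (ob Y i) (ob X i)),
    [/\ is_cxmor f, is_cxmor g,
        f 0%N = eqH (esym e0) /\ f n.+1 = eqH (esym e1),
        g 0%N = eqH e0 /\ g n.+1 = eqH e1 &
        homotopic (fun i => g i ⊚ f i) (fun i => idm _) /\
        homotopic (fun i => f i ⊚ g i) (fun i => idm _)].

Definition nExangle (X : Cx C) (d : Ext E (ob X n.+1) (ob X 0%N)) : Prop :=
  [/\ (forall i, (i < n)%N -> df X i.+1 ⊚ df X i = 0),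
      pf (df X 0%N) d = 0 /\ pb (df X n) d = 0,
      (* C(W,X^0) -> ... -> C(W,X^{n+1}) -> E(W,X^0) exact *)
      (forall W : C,
        (forall j, (j < n)%N -> forall g : Hom W (ob X j.+1),
            df X j.+1 ⊚ g = 0 <-> exists h : Hom W (ob X j), df X j ⊚ h = g) /\
        (forall g : Hom W (ob X n.+1),
            pb g d = 0 <-> exists h : Hom W (ob X n), df X n ⊚ h = g)) &
      (* C(X^{n+1},W) -> ... -> C(X^0,W) -> E(X^{n+1},W) exact *)
      (forall W : C,
        (forall g : Hom (ob X 0%N) W,
            pf g d = 0 <-> exists h : Hom (ob X 1%N) W, h ⊚ df X 0%N = g) /\
        (forall j, (j < n)%N -> forall g : Hom (ob X j.+1) W,
            g ⊚ df X j = 0 <-> exists h : Hom (ob X j.+2) W, h ⊚ df X j.+1 = g))].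

(* the realization s : "s X d" means  X \in s(d) *)
Variable s : forall X : Cx C, Ext E (ob X n.+1) (ob X 0%N) -> Prop.
Arguments s : clear implicits.

(* s(d) is a homotopy equivalence class in C^{n+2}_{(A,C)}, for d in E(C,A) *)
Definition is_realization : Prop :=
  (forall (A Z : C) (d : Ext E Z A),
     exists (X : Cx C) (e0 : ob X 0%N = A) (e1 : ob X n.+1 = Z),
       s X (castExt (esym e0) e1 d)) /\
  (forall (X Y : Cx C) (d : Ext E (ob X n.+1) (ob X 0%N))
          (e0 : ob Y 0%N = ob X 0%N) (e1 : ob Y n.+1 = ob X n.+1),
     s X d -> (s Y (castExt (esym e0) e1 d) <-> htpy_equiv e0 e1)) /\
  (forall (X Y : Cx C) (d : Ext E (ob X n.+1) (ob X 0%N))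
          (d' : Ext E (ob Y n.+1) (ob Y 0%N))
          (a : Hom (ob X 0%N) (ob Y 0%N)) (c : Hom (ob X n.+1) (ob Y n.+1)),
     s X d -> s Y d' -> pf a d = pb c d' ->
     exists f : forall i, Hom (ob X i) (ob Y i),
       [/\ is_cxmor f, f 0%N = a & f n.+1 = c]).

Definition R1 : Prop :=
  forall X d, s X d -> nExangle d.

Definition R2 : Prop :=
  (forall (X : Cx C) (e : ob X 0%N = ob X 1%N),
     df X 0%N = eqH e -> (forall i, (1 < i <= n.+1)%N -> ob X i = zob) -> s X 0) /\
  (forall (X : Cx C) (e : ob X n = ob X n.+1),
     (forall i, (i < n)%N -> ob X i = zob) -> df X n = eqH e -> s X 0).

Definition isInfl (A B : C) (f : Hom A B) : Prop :=
  exists (X : Cx C) (d : Ext E (ob X n.+1) (ob X 0%N))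
         (e0 : ob X 0%N = A) (e1 : ob X 1%N = B),
    s X d /\ df X 0%N = eqH (esym e1) ⊚ f ⊚ eqH e0.

Definition isDefl (B Z : C) (g : Hom B Z) : Prop :=
  exists (X : Cx C) (d : Ext E (ob X n.+1) (ob X 0%N))
         (e0 : ob X n = B) (e1 : ob X n.+1 = Z),
    s X d /\ df X n = eqH (esym e1) ⊚ g ⊚ eqH e0.

Definition EA1 : Prop :=
  (forall (A B D : C) (f : Hom A B) (g : Hom B D),
     isInfl f -> isInfl g -> isInfl (g ⊚ f)) /\
  (forall (A B D : C) (f : Hom A B) (g : Hom B D),
     isDefl f -> isDefl g -> isDefl (g ⊚ f)).

(* M is (a representative of) the mapping cone M_f of f : X -> Y with f^0 = 1:
   M^0 = X^1, M^i = X^{i+1} (+) Y^i (1 <= i <= n), M^{n+1} = Y^{n+1},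
   d^0 = [-d^1_X ; f^1], d^i = [[-d^{i+1}_X, 0], [f^{i+1}, d^i_Y]],
   d^n = [f^{n+1}  d^n_Y]. *)
Definition is_cone (X Y : Cx C) (f : forall i, Hom (ob X i) (ob Y i)) (M : Cx C)
  (e0 : ob M 0%N = ob X 1%N) (e1 : ob M n.+1 = ob Y n.+1) : Prop :=
  exists (iX : forall i, Hom (ob X i.+1) (ob M i)) (iY : forall i, Hom (ob Y i) (ob M i))
         (pX : forall i, Hom (ob M i) (ob X i.+1)) (pY : forall i, Hom (ob M i) (ob Y i)),
  [/\ (forall i, (0 < i <= n)%N ->
         [/\ pX i ⊚ iX i = idm _, pY i ⊚ iY i = idm _, pX i ⊚ iY i = 0,
             pY i ⊚ iX i = 0 & iX i ⊚ pX i + iY i ⊚ pY i = idm _]),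
      pX 1%N ⊚ df M 0%N = - (df X 1%N ⊚ eqH e0) /\
      pY 1%N ⊚ df M 0%N = f 1%N ⊚ eqH e0,
      (forall i, (0 < i < n)%N ->
         [/\ pX i.+1 ⊚ df M i ⊚ iX i = - df X i.+1,
             pX i.+1 ⊚ df M i ⊚ iY i = 0,
             pY i.+1 ⊚ df M i ⊚ iX i = f i.+1 &
             pY i.+1 ⊚ df M i ⊚ iY i = df Y i]) &
      eqH e1 ⊚ df M n ⊚ iX n = f n.+1 /\ eqH e1 ⊚ df M n ⊚ iY n = df Y n].

(* M is (a representative of) the mapping cocone M^f of f : X -> Y with f^{n+1} = 1:
   M^0 = X^0, M^{j+1} = X^{j+1} (+) Y^j (0 <= j < n), M^{n+1} = Y^n,
   d^0 = [-d^0_X ; f^0], d^i = [[-d^i_X, 0], [f^i, d^{i-1}_Y]],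
   d^n = [f^n  d^{n-1}_Y]. *)
Definition is_cocone (X Y : Cx C) (f : forall i, Hom (ob X i) (ob Y i)) (M : Cx C)
  (e0 : ob M 0%N = ob X 0%N) (e1 : ob M n.+1 = ob Y n) : Prop :=
  exists (iX : forall j, Hom (ob X j.+1) (ob M j.+1)) (iY : forall j, Hom (ob Y j) (ob M j.+1))
         (pX : forall j, Hom (ob M j.+1) (ob X j.+1)) (pY : forall j, Hom (ob M j.+1) (ob Y j)),
  [/\ (forall j, (j < n)%N ->
         [/\ pX j ⊚ iX j = idm _, pY j ⊚ iY j = idm _, pX j ⊚ iY j = 0,
             pY j ⊚ iX j = 0 & iX j ⊚ pX j + iY j ⊚ pY j = idm _]),
      pX 0%N ⊚ df M 0%N = - (df X 0%N ⊚ eqH e0) /\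
      pY 0%N ⊚ df M 0%N = f 0%N ⊚ eqH e0,
      (forall j, (j.+1 < n)%N ->
         [/\ pX j.+1 ⊚ df M j.+1 ⊚ iX j = - df X j.+1,
             pX j.+1 ⊚ df M j.+1 ⊚ iY j = 0,
             pY j.+1 ⊚ df M j.+1 ⊚ iX j = f j.+1 &
             pY j.+1 ⊚ df M j.+1 ⊚ iY j = df Y j]) &
      eqH e1 ⊚ df M n ⊚ iX m = f n /\ eqH e1 ⊚ df M n ⊚ iY m = df Y m].

(* (EA2): for d in E(D,A), c : C -> D, <X, c^* d>, <Y, d> distinguished,
   (1_A, c) has a good lift. *)
Definition EA2 : Prop :=
  forall (X Y : Cx C) (d : Ext E (ob Y n.+1) (ob Y 0%N))
         (c : Hom (ob X n.+1) (ob Y n.+1)) (eA : ob X 0%N = ob Y 0%N),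
    s Y d -> s X (pf (eqH (esym eA)) (pb c d)) ->
    exists f : forall i, Hom (ob X i) (ob Y i),
      [/\ is_cxmor f, f 0%N = eqH eA, f n.+1 = c &
          forall (M : Cx C) (e0 : ob M 0%N = ob X 1%N) (e1 : ob M n.+1 = ob Y n.+1),
            is_cone f e0 e1 ->
            s M (castExt (esym e0) e1 (pf (df X 0%N ⊚ eqH (esym eA)) d))].

(* (EA2^op): for d in E(C,A), a : A -> B, <X, d>, <Y, a_* d> distinguished,
   (a, 1_C) has a good lift. *)
Definition EA2op : Prop :=
  forall (X Y : Cx C) (d : Ext E (ob X n.+1) (ob X 0%N))
         (a : Hom (ob X 0%N) (ob Y 0%N)) (eC : ob X n.+1 = ob Y n.+1),
    s X d -> s Y (pb (eqH (esym eC)) (pf a d)) ->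
    exists f : forall i, Hom (ob X i) (ob Y i),
      [/\ is_cxmor f, f 0%N = a, f n.+1 = eqH eC &
          forall (M : Cx C) (e0 : ob M 0%N = ob X 0%N) (e1 : ob M n.+1 = ob Y n),
            is_cocone f e0 e1 ->
            s M (castExt (esym e0) e1 (pb (eqH (esym eC) ⊚ df Y n) d))].

Definition nExangulated : Prop :=
  [/\ is_realization, R1, R2, EA1 & (EA2 /\ EA2op)].

Record SObj := { sx : Cx C; sd : Ext E (ob sx n.+1) (ob sx 0%N); sdist : s sx sd }.

Definition is_Smor (A B : SObj) (f : forall i, Hom (ob (sx A) i) (ob (sx B) i)) : Prop :=
  is_cxmor f /\ pf (f 0%N) (sd A) = pb (f n.+1) (sd B).

Definition inR2 (A B : SObj) (f : forall i, Hom (ob (sx A) i) (ob (sx B) i)) : Prop :=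
  exists h : Hom (ob (sx A) n.+1) (ob (sx B) n), f n.+1 = df (sx B) n ⊚ h.

Definition epi_modR2 (A B : SObj) (f : forall i, Hom (ob (sx A) i) (ob (sx B) i)) : Prop :=
  forall (D : SObj) (g1 g2 : forall i, Hom (ob (sx B) i) (ob (sx D) i)),
    is_Smor g1 -> is_Smor g2 ->
    inR2 (fun i => g1 i ⊚ f i - g2 i ⊚ f i) -> inR2 (fun i => g1 i - g2 i).

End NExang.

From mathcomp Require Import all_boot ssralg.
From Stdlib Require Import ClassicalEpsilon ProofIrrelevance.
Set Implicit Arguments. Unset Strict Implicit. Unset Printing Implicit Defensive.
Import GRing.Theory.

(* If [phi_{n+1} beta_n] has a section [t] and [(g1 - g2) phi] lies in R_2,
   then [g1_{n+1} - g2_{n+1}] equals [(g1 - g2)_{n+1} [phi_{n+1} beta_n] t], and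
   both components of [(g1 - g2)_{n+1} [phi_{n+1} beta_n]] factor through the
   last differential of the target.
   Conversely, realize [phi_{n+1}^* delta'] by some [X]; (EA2) gives a good lift
   [f : X -> B] with [f_{n+1} = phi_{n+1}], whose mapping cone [M] is
   distinguished with last differential [[phi_{n+1} beta_n]], and (R0) gives a
   morphism [g : B -> M] with [g_{n+1} = 1].  Then [g phi] lies in R_2, hence so
   does [g] if [phi] is an epimorphism modulo R_2, and a factorization
   [1 = [phi_{n+1} beta_n] h] is the required section. *)

Section AddCatTheory.
Local Open Scope ring_scope.
Variable C : AddCat.

Lemma cmp0l (A B D : C) (f : Hom A B) : (0 : Hom B D) ⊚ f = 0.
Proof. by apply: (addrI ((0 : Hom B D) ⊚ f)); rewrite -cmpDl !addr0. Qed.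

Lemma cmp0r (A B D : C) (g : Hom B D) : g ⊚ (0 : Hom A B) = 0.
Proof. by apply: (addrI (g ⊚ (0 : Hom A B))); rewrite -cmpDr !addr0. Qed.

Lemma cmpNl (A B D : C) (g : Hom B D) (f : Hom A B) : (- g) ⊚ f = - (g ⊚ f).
Proof. by apply: (addrI (g ⊚ f)); rewrite -cmpDl !subrr cmp0l. Qed.

Lemma cmpNr (A B D : C) (g : Hom B D) (f : Hom A B) : g ⊚ (- f) = - (g ⊚ f).
Proof. by apply: (addrI (g ⊚ f)); rewrite -cmpDr !subrr cmp0r. Qed.

Lemma cmpBl (A B D : C) (g g' : Hom B D) (f : Hom A B) :
  (g - g') ⊚ f = g ⊚ f - g' ⊚ f.
Proof. by rewrite cmpDl cmpNl. Qed.

Lemma cmpBr (A B D : C) (g : Hom B D) (f f' : Hom A B) :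
  g ⊚ (f - f') = g ⊚ f - g ⊚ f'.
Proof. by rewrite cmpDr cmpNr. Qed.

Lemma cmpAr (A B D F : C) (h : Hom D F) (g : Hom B D) (f : Hom A B) :
  h ⊚ g ⊚ f = h ⊚ (g ⊚ f).
Proof. by rewrite cmpA. Qed.

Lemma bp11r (A B D : C) (x : Hom D A) : bp1 ⊚ ((bi1 : Hom A (bp A B)) ⊚ x) = x.
Proof. by rewrite cmpA bp11 cmp1m. Qed.

Lemma bp22r (A B D : C) (x : Hom D B) : bp2 ⊚ ((bi2 : Hom B (bp A B)) ⊚ x) = x.
Proof. by rewrite cmpA bp22 cmp1m. Qed.

Lemma bp12r (A B D : C) (x : Hom D B) : (bp1 : Hom (bp A B) A) ⊚ (bi2 ⊚ x) = 0.
Proof. by rewrite cmpA bp12 cmp0l. Qed.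

Lemma bp21r (A B D : C) (x : Hom D A) : (bp2 : Hom (bp A B) B) ⊚ (bi1 ⊚ x) = 0.
Proof. by rewrite cmpA bp21 cmp0l. Qed.

Lemma rowmapKl (A B Z : C) (f : Hom A Z) (g : Hom B Z) : rowmap f g ⊚ bi1 = f.
Proof. by rewrite /rowmap cmpDl -!cmpA bp11 bp21 cmpm1 cmp0r addr0. Qed.

Lemma rowmapKr (A B Z : C) (f : Hom A Z) (g : Hom B Z) : rowmap f g ⊚ bi2 = g.
Proof. by rewrite /rowmap cmpDl -!cmpA bp12 bp22 cmpm1 cmp0r add0r. Qed.

Lemma cmp_rowmap (A B Z W : C) (u : Hom Z W) (f : Hom A Z) (g : Hom B Z) :
  u ⊚ rowmap f g = rowmap (u ⊚ f) (u ⊚ g).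
Proof. by rewrite /rowmap cmpDr !cmpA. Qed.

Lemma rowmap_cmpl (A A' B Z : C) (f : Hom A Z) (u : Hom A' A) (g : Hom B Z) :
  rowmap (f ⊚ u) g = rowmap f g ⊚ rowmap (bi1 ⊚ u) bi2.
Proof. by rewrite cmp_rowmap cmpA rowmapKl rowmapKr. Qed.

Lemma eqHK (P Q : C) (e : P = Q) : eqH e ⊚ eqH (esym e) = idm Q.
Proof. by case: Q / e; rewrite /= cmp1m. Qed.

Lemma eqHVK (P Q : C) (e : P = Q) : eqH (esym e) ⊚ eqH e = idm P.
Proof. by case: Q / e; rewrite /= cmp1m. Qed.

(* The identity when [P = Q], and the junk value [0] otherwise; it lets the
   mapping cone below, whose objects are chosen by boolean tests on the index,
   be written without dependent matching. *)
Definition castH (P Q : C) : Hom P Q :=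
  match excluded_middle_informative (P = Q) with
  | left e => eqH e
  | right _ => 0
  end.

Lemma castH_eq (P Q : C) (e : P = Q) : castH P Q = eqH e.
Proof.
rewrite /castH; case: excluded_middle_informative => [e'|ne]; last by case: ne.
by rewrite (proof_irrelevance _ e e').
Qed.

Lemma castH_id (P : C) : castH P P = idm P.
Proof. exact: (castH_eq erefl). Qed.

Lemma castHK (P Q : C) : P = Q -> castH Q P ⊚ castH P Q = idm P.
Proof. by move=> e; case: Q / e; rewrite castH_id cmp1m. Qed.

Lemma castHKr (P Q D : C) (x : Hom D P) :
  P = Q -> castH Q P ⊚ (castH P Q ⊚ x) = x.
Proof. by move=> e; rewrite cmpA castHK // cmp1m. Qed.

End AddCatTheory.

Ltac hom_simpl :=
  rewrite ?(cmpAr, cmpDl, cmpDr, cmpNl, cmpNr, cmp0l, cmp0r, bp11r, bp22r,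
            bp12r, bp21r, bp11, bp22, bp12, bp21, rowmapKl, rowmapKr, cmp1m, cmpm1, addr0, add0r, oppr0).

Section BiFunTheory.
Local Open Scope ring_scope.
Variables (C : AddCat) (E : BiFun C).

Lemma pf0 (Z A A' : C) (d : Ext E Z A) : pf (0 : Hom A A') d = 0.
Proof. by apply: (addrI (pf (0 : Hom A A') d)); rewrite -pf_adda !addr0. Qed.

Lemma pb0 (Z' Z A : C) (d : Ext E Z A) : pb (0 : Hom Z' Z) d = 0.
Proof. by apply: (addrI (pb (0 : Hom Z' Z) d)); rewrite -pb_addc !addr0. Qed.

Lemma pb_castExt (A A' Z Z' : C) (eA : A = A') (eZ : Z' = Z) (d : Ext E Z A) :
  pb (eqH (esym eZ)) (castExt eA eZ d) = pf (eqH eA) d.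
Proof. by rewrite /castExt pf_pb -pb_cmp eqHK pb_id. Qed.

End BiFunTheory.

Section MappingCone.
Local Open Scope ring_scope.
Variables (C : AddCat) (m : nat) (X Y : Cx C) (f : forall i, Hom (ob X i) (ob Y i)).
Local Notation n := m.+1.

Definition cone_mid i : C := bp (ob X i.+1) (ob Y i).

Definition cone_ob i : C :=
  if i == 0%N then ob X 1%N else if i == n.+1 then ob Y n.+1 else cone_mid i.

Definition cone_mid_df i : Hom (cone_mid i) (cone_mid i.+1) :=
  bi1 ⊚ (- df X i.+1 ⊚ bp1) + bi2 ⊚ (f i.+1 ⊚ bp1 + df Y i ⊚ bp2).

Definition cone_df i : Hom (cone_ob i) (cone_ob i.+1) :=
  if i == 0%N then
    castH (cone_mid 1%N) _ ⊚ (bi1 ⊚ - df X 1%N + bi2 ⊚ f 1%N) ⊚ castH _ (ob X 1%N)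
  else if i == n then
    castH (ob Y n.+1) _ ⊚ rowmap (f n.+1) (df Y n) ⊚ castH _ (cone_mid n)
  else castH (cone_mid i.+1) _ ⊚ cone_mid_df i ⊚ castH _ (cone_mid i).

Definition cone : Cx C := {| ob := cone_ob; df := cone_df |}.

Lemma cone_ob_mid i : (0 < i <= n)%N -> cone_ob i = cone_mid i.
Proof.
case: i => // i /= le_in; rewrite /cone_ob /= ifF //.
by apply/negbTE; rewrite eqSS neq_ltn le_in.
Qed.

Lemma cone_ob_top : cone_ob n.+1 = ob Y n.+1.
Proof. by rewrite /cone_ob /= eqxx. Qed.

Lemma cone_df0 :
  cone_df 0%N = castH (cone_mid 1%N) (cone_ob 1%N) ⊚ (bi1 ⊚ - df X 1%N + bi2 ⊚ f 1%N).
Proof. by rewrite /cone_df /= (castH_id (ob X 1%N)) cmpm1. Qed.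

Lemma cone_df_mid i : (0 < i < n)%N ->
  cone_df i = castH (cone_mid i.+1) (cone_ob i.+1) ⊚ cone_mid_df i
                ⊚ castH (cone_ob i) (cone_mid i).
Proof.
case/andP=> i_gt0 lt_in; rewrite /cone_df ifF; last exact/negbTE/lt0n_neq0.
by rewrite ifF //; apply/negbTE; rewrite neq_ltn lt_in.
Qed.

Lemma cone_df_top : cone_df n =
  castH (ob Y n.+1) (cone_ob n.+1) ⊚ rowmap (f n.+1) (df Y n)
    ⊚ castH (cone_ob n) (cone_mid n).
Proof. by rewrite /cone_df /= eqxx. Qed.

Lemma cone_is_cone : is_cone f (M := cone) (erefl (ob X 1%N)) cone_ob_top.
Proof.
pose iX i := castH (cone_mid i) (cone_ob i) ⊚ bi1.
pose iY i := castH (cone_mid i) (cone_ob i) ⊚ bi2.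
pose pX i := bp1 ⊚ castH (cone_ob i) (cone_mid i).
pose pY i := bp2 ⊚ castH (cone_ob i) (cone_mid i).
have castK i x : (0 < i <= n)%N ->
    castH (cone_ob i) (cone_mid i) ⊚ (castH (cone_mid i) (cone_ob i) ⊚ x) = x.
  by move/cone_ob_mid/esym; apply: castHKr.
exists iX, iY, pX, pY; split.
- move=> i le_in; rewrite /iX /iY /pX /pY.
  split; hom_simpl; rewrite ?castK //; hom_simpl => //.
  by rewrite -cmpDr !cmpA -cmpDl bpsum cmp1m castHK //; apply: cone_ob_mid.
- by rewrite /= cone_df0 /pX /pY; hom_simpl; rewrite !castK //; hom_simpl.
- move=> i lt_in; rewrite /= cone_df_mid // /pX /pY /iX /iY /cone_mid_df.
  have [i_gt0 lt_in'] := andP lt_in.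
  by hom_simpl; rewrite !castK ?i_gt0 ?(ltnW lt_in') //; hom_simpl.
- rewrite -[df cone n]/(cone_df n) cone_df_top -(castH_eq cone_ob_top) /iX /iY; hom_simpl.
  rewrite !castK ?leqnn // !(castHKr _ (esym cone_ob_top)).
  by hom_simpl.
Qed.

Lemma exists_cone : exists (M : Cx C) (e0 : ob M 0%N = ob X 1%N)
  (e1 : ob M n.+1 = ob Y n.+1), is_cone f e0 e1.
Proof. by exists cone, erefl, cone_ob_top; apply: cone_is_cone. Qed.

End MappingCone.

Section ConeTheory.
Local Open Scope ring_scope.
Variables (C : AddCat) (m : nat).
Local Notation n := m.+1.

Lemma cone_last_df (X Y M : Cx C) (f : forall i, Hom (ob X i) (ob Y i))
    (e0 : ob M 0%N = ob X 1%N) (e1 : ob M n.+1 = ob Y n.+1) :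
  is_cone f e0 e1 ->
  exists (iX : Hom (ob X n.+1) (ob M n)) (p : Hom (ob M n) (bp (ob X n.+1) (ob Y n))),
    eqH e1 ⊚ df M n ⊚ iX = f n.+1 /\
    eqH e1 ⊚ df M n = rowmap (f n.+1) (df Y n) ⊚ p.
Proof.
case=> iX [iY [pX [pY [bpM _ _ [dM_iX dM_iY]]]]].
exists (iX n), (bi1 ⊚ pX n + bi2 ⊚ pY n); split=> //.
have [_ _ _ _ sumM] := bpM n (leqnn n).
by rewrite cmpDr !cmpA rowmapKl rowmapKr -dM_iX -dM_iY -!cmpA -!cmpDr sumM cmpm1.
Qed.

End ConeTheory.

Section SCategory.
Local Open Scope ring_scope.
Variables (m : nat) (C : AddCat) (E : BiFun C).
Variable s : forall X : Cx C, Ext E (ob X m.+2) (ob X 0%N) -> Prop.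
Arguments s : clear implicits.
Local Notation n := m.+1.

Lemma is_Smor0 (A B : SObj s) :
  is_Smor (fun i => 0 : Hom (ob (sx A) i) (ob (sx B) i)).
Proof. by split=> [i _|]; rewrite ?cmp0l ?cmp0r ?pf0 ?pb0. Qed.

Lemma retraction_epi_modR2 (A B : SObj s)
    (phi : forall i, Hom (ob (sx A) i) (ob (sx B) i)) :
  is_retraction (rowmap (phi n.+1) (df (sx B) n)) -> epi_modR2 phi.
Proof.
move=> [t rt] D g1 g2 [g1_mor _] [g2_mor _] [h /= gphi_h].
exists (rowmap h (g1 n - g2 n) ⊚ t).
have gbeta : (g1 n.+1 - g2 n.+1) ⊚ df (sx B) n = df (sx D) n ⊚ (g1 n - g2 n).
  by rewrite cmpBl g1_mor // g2_mor // -cmpBr.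
by rewrite -[LHS]cmpm1 -rt cmpA cmp_rowmap cmpBl gphi_h gbeta -cmp_rowmap cmpA.
Qed.

Section ConeSmor.
Hypotheses (s_real : is_realization s) (s_EA2 : EA2 s).

Lemma exists_Smor_to_cone (B : SObj s) (Z : C) (c : Hom Z (ob (sx B) n.+1)) :
  exists (D : SObj s) (g : forall i, Hom (ob (sx B) i) (ob (sx D) i))
         (k : Hom Z (ob (sx D) n)),
    [/\ is_Smor g, g n.+1 ⊚ c = df (sx D) n ⊚ k &
        forall h, g n.+1 = df (sx D) n ⊚ h -> is_retraction (rowmap c (df (sx B) n))].
Proof.
have [realize [_ lift_R0]] := s_real.
have [X [eX0 [eXZ sX]]] := realize _ _ (pb c (sd B)).
have sX' : s X (pf (eqH (esym eX0)) (pb (c ⊚ eqH eXZ) (sd B))) by rewrite pb_cmp.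
have [f [_ _ fZ s_cone]] := s_EA2 (sdist B) sX'.
have [M [e0 [e1 coneM]]] := exists_cone m f.
have sM := s_cone M e0 e1 coneM.
set dM := castExt _ _ _ in sM.
have dM_compat : pf (eqH (esym e0) ⊚ (df X 0%N ⊚ eqH (esym eX0))) (sd B)
               = pb (eqH (esym e1)) dM.
  by rewrite pb_castExt pf_cmp.
have [g [g_mor g0 gtop]] := lift_R0 _ _ _ _ _ _ (sdist B) sM dM_compat.
have [iX [p [dM_iX dM_p]]] := cone_last_df coneM.
exists (Build_SObj sM), g, (iX ⊚ eqH (esym eXZ)); split=> /=.
- by split=> //; rewrite g0 gtop.
- have -> : c = c ⊚ eqH eXZ ⊚ eqH (esym eXZ) by rewrite -cmpA eqHK cmpm1.
  by rewrite gtop -fZ -dM_iX !cmpA eqHVK cmp1m.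
- move=> h; rewrite gtop => e1_h.
  exists (rowmap (bi1 ⊚ eqH eXZ) bi2 ⊚ p ⊚ h).
  by rewrite !cmpA -rowmap_cmpl -fZ -dM_p -!cmpA -e1_h eqHK.
Qed.

Lemma epi_modR2_retraction (A B : SObj s)
    (phi : forall i, Hom (ob (sx A) i) (ob (sx B) i)) :
  epi_modR2 phi -> is_retraction (rowmap (phi n.+1) (df (sx B) n)).
Proof.
move=> phi_epi; have [D [g [k [g_mor g_phi g_split]]]] := exists_Smor_to_cone (phi n.+1).
have g_phi_R2 : inR2 (fun i => g i ⊚ phi i - 0 ⊚ phi i).
  by exists k; rewrite cmp0l subr0.
have [h /=] := phi_epi D g (fun=> 0) g_mor (is_Smor0 _ _) g_phi_R2.
by rewrite subr0; apply: g_split.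
Qed.

End ConeSmor.
End SCategory.

Theorem lemma4p2 (m : nat) (C : AddCat) (E : BiFun C)
  (s : forall X : Cx C, Ext E (ob X m.+2) (ob X 0) -> Prop)
  (HC : nExangulated s)
  (A B : SObj s) (phi : forall i, Hom (ob (sx A) i) (ob (sx B) i))
  (Hphi : is_Smor phi) :
  epi_modR2 phi <-> is_retraction (rowmap (phi m.+2) (df (sx B) m.+1)).
Proof.
have [s_real _ _ _ [s_EA2 _]] := HC.
split; [exact: (epi_modR2_retraction s_real s_EA2) | exact: retraction_epi_modR2].
Qed.
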